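(* Let $r\in\mathbb{N}\setminus\{0\}$ and \[ G=\left\langle a_1,\ldots,a_r,t_1,\ldots,t_r \;\middle|\; a_ia_j=a_ja_i,\ t_it_j=t_jt_i,\ t_i^2=1,\ t_i^{-1}a_jt_i=\begin{cases}a_j & i\neq j\\ a_i^{-1} & i=j\end{cases}\ (1\le i,j\le r)\right\rangle . \] Then $G$ is virtually abelian of rank $r$, its automorphic growth satisfies $\alpha_G\sim(n\mapsto n^r)$, and $[G,G]=\langle a_1^2,\ldots,a_r^2\rangle$.
   Context: For a finitely generated group $G$ with finite generating set $\Sigma$, the automorphic growth function sends $n$ to the number of $\operatorname{Aut}(G)$-orbits of $G$ containing an element of word length at most $n$; $\alpha_G$ denotes its class under $\sim$, where $f\sim g$ iff $f\preccurlyeq g$ and $g\preccurlyeq f$, and $f\preccurlyeq g$ means there is $\lambda\in\mathbb{N}\setminus\{0\}$ with $f(n)\le\lambda g(\lambda n+\lambda)+\lambda$ for all $n$. The rank of a virtually abelian group is the rank of a finite-index free abelian subgroup. *)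

From mathcomp Require Import all_boot monoid ssralg ssrint.

Set Implicit Arguments.
Unset Strict Implicit.
Unset Printing Implicit Defensive.

Local Open Scope group_scope.

Section Defs.
Variable G : groupType.

Definition ghom (H K : groupType) (f : H -> K) : Prop :=
  forall x y, f (x * y) = f x * f y.

Definition gaut (f : G -> G) : Prop := ghom f /\ bijective f.

Definition aut_equiv (x y : G) : Prop := exists f, gaut f /\ f x = y.

Definition wlen_le (S : seq G) (n : nat) (g : G) : Prop :=
  exists w : seq G, size w <= n /\
    (forall x, x \in w -> (x \in S) \/ (x^-1 \in S)) /\ foldr mul 1 w = g.

Definition generates (S : seq G) : Prop := forall g, exists n, wlen_le S n g.

Definition in_gen (P : G -> Prop) (g : G) : Prop :=
  exists w : seq G, (forall x, x \in w -> P x \/ P x^-1) /\ foldr mul 1 w = g.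

Definition commutator_elt (g : G) : Prop := exists x y, g = [~ x, y].

(* f n = number of Aut(G)-orbits of G meeting the ball of radius n w.r.t. S:
   witnessed by a duplicate-free list of pairwise Aut-inequivalent elements
   of the ball, meeting every orbit that meets the ball. *)
Definition is_aut_growth (S : seq G) (f : nat -> nat) : Prop :=
  forall n, exists s : seq G,
    [/\ size s = f n, uniq s,
        (forall x, x \in s -> wlen_le S n x),
        (forall x y, x \in s -> y \in s -> aut_equiv x y -> x = y) &
        (forall g, wlen_le S n g -> exists2 x, x \in s & aut_equiv g x)].

(* G has a finite-index subgroup isomorphic to Z^r *)
Definition virtually_abelian_of_rank (r : nat) : Prop :=
  exists phi : ('I_r -> int) -> G,
    (forall u v, phi (fun i => (u i + v i)%R) = phi u * phi v) /\
    (forall u v, phi u = phi v -> forall i, u i = v i) /\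
    (exists cs : seq G, forall g, exists c u, c \in cs /\ g = c * phi u).

End Defs.

Definition gle (f g : nat -> nat) : Prop :=
  exists l, 0 < l /\ forall n, f n <= l * g (l * n + l) + l.
Definition gequiv (f g : nat -> nat) : Prop := gle f g /\ gle g f.

Definition rels (H : groupType) (r : nat) (a t : 'I_r -> H) : Prop :=
  [/\ (forall i j, a i * a j = a j * a i),
      (forall i j, t i * t j = t j * t i),
      (forall i, t i ^+ 2 = 1) &
      (forall i j, (t i)^-1 * a j * t i = if i == j then (a i)^-1 else a j)].

(* (G, a, t) is the group presented by generators a, t and relations [rels]:
   the relations hold, a and t generate G, and every family in any group
   satisfying the relations is the image of a homomorphism from G. *)
Definition presents (G : groupType) (r : nat) (a t : 'I_r -> G) : Prop :=
  [/\ rels a t,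
      (forall g, in_gen (fun x => exists i, x = a i \/ x = t i) g) &
      (forall (H : groupType) (b u : 'I_r -> H), rels b u ->
         exists f : G -> H, ghom f /\ forall i, f (a i) = b i /\ f (t i) = u i)].

(* The relations say that G is the direct power D^r of the infinite dihedral
   group D = <a, t | t^2 = 1, t^-1 a t = a^-1>: the normal forms
   a_1^k_1 t_1^e_1 ... a_r^k_r t_r^e_r define a homomorphism D^r -> G that is
   inverse to the one given by the presentation.
   The translations Z^r have index 2^r, and every commutator is a translation
   with even coordinates, e.g. [a_i^-1, t_i] = a_i^2.
   For the growth, the coordinatewise automorphisms a -> a^(+-1), t -> a^c t
   move every element of the n-ball to a canonical form whose coordinates are
   either t or a^k with 0 <= k <= Cn, so there are O(n^r) orbits.  Conversely,
   the elements of the axes <a_i> are characterized among the elements commuting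
   with all squares by having a maximal centralizer, and a_i^(+-1) are the ones
   that are not proper powers, so automorphisms act on the translations by
   signed permutations of the coordinates.  Translations whose i-th coordinate
   lies in [(i+1)(n+1), (i+2)(n+1)) are therefore pairwise inequivalent, which
   gives (n+1)^r orbits in a ball of radius O(n). *)

From HB Require Import structures.
From mathcomp Require Import all_boot monoid ssralg ssrint.
From mathcomp Require Import ssrnum zify.
From Stdlib Require Import Classical IndefiniteDescription.
Import GRing.Theory Num.Theory.

Set Implicit Arguments.
Unset Strict Implicit.
Unset Printing Implicit Defensive.

Local Open Scope group_scope.

Section Homomorphisms.
Variables (G H : groupType) (f : G -> H).
Hypothesis hf : ghom f.

Lemma ghom1 : f 1 = 1.
Proof. by apply: (@mulgI _ (f 1)); rewrite -hf !mulg1. Qed.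

Lemma ghomV x : f x^-1 = (f x)^-1.
Proof. by apply: (@mulIg _ (f x)); rewrite -hf !mulVg ghom1. Qed.

Lemma ghomX x n : f (x ^+ n) = f x ^+ n.
Proof. by elim: n => [|n IH]; rewrite ?ghom1 // !expgS hf IH. Qed.

Lemma ghomR x y : f [~ x, y] = [~ f x, f y].
Proof. by rewrite /commg /conjg !hf !ghomV. Qed.

Lemma ghom_prod (I : Type) (r : seq I) (P : pred I) (F : I -> G) :
  f (\prod_(i <- r | P i) F i) = \prod_(i <- r | P i) f (F i).
Proof. exact: (big_morph f hf ghom1). Qed.

Lemma ghom_can (g : H -> G) : cancel f g -> cancel g f -> ghom g.
Proof. by move=> fK gK x y; apply: (can_inj fK); rewrite hf !gK. Qed.

End Homomorphisms.

Lemma ghom_comp (G H K : groupType) (f : G -> H) (g : H -> K) :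
  ghom f -> ghom g -> ghom (g \o f).
Proof. by move=> hf hg x y /=; rewrite hf hg. Qed.

Lemma ghom_conjg (G : groupType) (y : G) : ghom (conjg^~ y).
Proof. by move=> a b; rewrite /= conjMg. Qed.

Lemma ghom_commute (G H : groupType) (f : G -> H) x y :
  ghom f -> commute x y -> commute (f x) (f y).
Proof. by move=> hf cxy; rewrite /commute -!hf cxy. Qed.

Section IntegerPowers.
Variable G : groupType.
Implicit Types (x y : G) (k l : int).

Definition expgz x k : G :=
  match k with Posz n => x ^+ n | Negz n => x ^- n.+1 end.

Lemma expgzN x k : expgz x (- k)%R = (expgz x k)^-1.
Proof.
case: k => [[|n]|n]; first by rewrite /= invg1.
  by rewrite -NegzE.
by rewrite NegzE opprK /= invgK.
Qed.

Lemma expgzS x k : expgz x (1 + k)%R = x * expgz x k.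
Proof.
case: k => [n|[|n]].
- by rewrite -PoszD add1n /= expgS.
- have -> : (1 + Negz 0 = 0)%R by rewrite NegzE; lia.
  by rewrite /= expg1 mulgV.
- have -> : (1 + Negz n.+1 = Negz n)%R by rewrite !NegzE; lia.
  by rewrite /= (expgSr x n.+1) invgM mulVKg.
Qed.

Lemma expgzB1 x k : expgz x (k - 1)%R = x^-1 * expgz x k.
Proof. by rewrite -{2}(subrK 1%R k) (addrC (k - 1)%R) expgzS mulKg. Qed.

Lemma expgzD x k l : expgz x (k + l)%R = expgz x k * expgz x l.
Proof.
elim/int_rec: k => [|n IH|n IH]; first by rewrite add0r mul1g.
  have -> : (n.+1%:Z = 1 + n%:Z)%R by lia.
  by rewrite -addrA !expgzS IH mulgA.
have -> : (- n.+1%:Z = - n%:Z - 1)%R by lia.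
by rewrite addrAC !expgzB1 IH mulgA.
Qed.

Lemma expgzV x k : expgz x^-1 k = (expgz x k)^-1.
Proof. by case: k => n /=; rewrite expVgn ?invgK. Qed.

Lemma commute_expgz x y k : commute x y -> commute x (expgz y k).
Proof. by case: k => n cxy /=; [|apply: commuteV]; apply: commuteX. Qed.

End IntegerPowers.

Lemma ghom_expgz (G H : groupType) (f : G -> H) (x : G) k :
  ghom f -> f (expgz x k) = expgz (f x) k.
Proof. by move=> hf; case: k => n /=; rewrite ?ghomV // ghomX. Qed.

Lemma expg_involution (G : groupType) (x : G) n : x * x = 1 -> x ^+ n = x ^+ odd n.
Proof.
move=> xx; elim: n => // n IH; rewrite expgS IH /=.
by case: (odd n) => /=; rewrite ?expg1 ?expg0 ?mulg1.
Qed.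

Lemma prodgM_commute_uniq (K : groupType) (J : eqType) (r : seq J) (F F' : J -> K) :
  uniq r -> (forall i j, i != j -> commute (F i) (F' j)) ->
  \prod_(i <- r) (F i * F' i) = \prod_(i <- r) F i * \prod_(i <- r) F' i.
Proof.
move=> + FF'; elim: r => [|i r IH] /=; first by rewrite !big_nil mulg1.
case/andP=> ir ur; rewrite !big_cons IH // !mulgA; congr (_ * _); rewrite -!mulgA.
congr (_ * _); rewrite big_seq; apply: commute_prod => j jr.
by apply/commute_sym/FF'; apply: contraNneq ir => <-.
Qed.

Lemma foldr_mul_cat (G : groupType) (w1 w2 : seq G) :
  foldr mul 1 (w1 ++ w2) = foldr mul 1 w1 * foldr mul 1 w2.
Proof. by elim: w1 => /= [|x w1 ->]; rewrite ?mul1g ?mulgA. Qed.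

Section Generation.
Variable G : groupType.
Implicit Types (P Q : G -> Prop) (x y : G).

Lemma in_gen_ind P (Q : G -> Prop) :
  Q 1 -> (forall x y, Q x -> Q y -> Q (x * y)) ->
  (forall x, P x -> Q x) -> (forall x, P x -> Q x^-1) ->
  forall x, in_gen P x -> Q x.
Proof.
move=> Q1 QM QP QV x [w [Pw <-]]; elim: w Pw => //= y w IH Pw.
apply: QM; last by apply: IH => z zw; apply: Pw; rewrite in_cons zw orbT.
by case: (Pw y (mem_head _ _)) => [/QP|/QV]; rewrite ?invgK.
Qed.

Lemma in_gen1 P : in_gen P 1.
Proof. by exists [::]. Qed.

Lemma in_genM P x y : in_gen P x -> in_gen P y -> in_gen P (x * y).
Proof.
move=> [w1 [P1 <-]] [w2 [P2 <-]]; exists (w1 ++ w2); split; last exact: foldr_mul_cat.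
by move=> z; rewrite mem_cat => /orP[/P1|/P2].
Qed.

Lemma in_gen_gen P x : P x -> in_gen P x.
Proof. by move=> Px; exists [:: x]; rewrite /= mulg1; split=> // z /[!inE] /eqP->; left. Qed.

Lemma in_genV P x : in_gen P x -> in_gen P x^-1.
Proof.
move: x; apply: (in_gen_ind (Q := fun x => in_gen P x^-1)) => [|x y|x Px|x Px];
  rewrite ?invg1 ?invgM ?invgK.
- exact: in_gen1.
- by move=> Px Py; apply: in_genM.
- by exists [:: x^-1]; rewrite /= mulg1; split=> // z /[!inE] /eqP->; right; rewrite invgK.
- exact: in_gen_gen.
Qed.

Lemma in_genX P x n : in_gen P x -> in_gen P (x ^+ n).
Proof. by move=> Px; elim: n => [|n IH]; [apply: in_gen1 | rewrite expgS; apply: in_genM]. Qed.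

Lemma in_gen_expgz P x k : in_gen P x -> in_gen P (expgz x k).
Proof. by case: k => n Px /=; [|apply: in_genV]; apply: in_genX. Qed.

Lemma in_gen_prod P (I : Type) (r : seq I) (F : I -> G) :
  (forall i, in_gen P (F i)) -> in_gen P (\prod_(i <- r) F i).
Proof.
move=> PF; elim: r => [|i r IH]; first by rewrite big_nil; apply: in_gen1.
by rewrite big_cons; apply: in_genM.
Qed.

Lemma in_gen_sub P Q x : (forall y, P y -> Q y) -> in_gen P x -> in_gen Q x.
Proof. by move=> PQ [w [Pw <-]]; exists w; split=> // y /Pw [] /PQ; [left|right]. Qed.

End Generation.

Lemma ghom_in_gen (G H : groupType) (f : G -> H) (P : G -> Prop) (Q : H -> Prop) x :
  ghom f -> (forall y, P y -> Q (f y)) -> in_gen P x -> in_gen Q (f x).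
Proof.
move=> hf PQ; move: x; apply: (in_gen_ind (Q := fun x => in_gen Q (f x))) => [|x y|x Px|x Px].
- by rewrite ghom1 //; apply: in_gen1.
- by rewrite hf; apply: in_genM.
- by apply: in_gen_gen; apply: PQ.
- by rewrite ghomV //; apply/in_genV/in_gen_gen/PQ.
Qed.

Lemma ghom_eq_in_gen (G H : groupType) (f g : G -> H) (P : G -> Prop) x :
  ghom f -> ghom g -> (forall y, P y -> f y = g y) -> in_gen P x -> f x = g x.
Proof.
move=> hf hg fg; move: x; apply: (in_gen_ind (Q := fun x => f x = g x)) => [|x y|x /fg|x /fg].
- by rewrite !ghom1.
- by rewrite hf hg => -> ->.
- by [].
- by rewrite !ghomV // => ->.
Qed.

Section WordLength.
Variable G : groupType.
Implicit Types (S : seq G) (x y : G).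

Lemma wlen_le_mono S m n x : m <= n -> wlen_le S m x -> wlen_le S n x.
Proof. by move=> mn [w [sw Sw]]; exists w; split; first exact: leq_trans mn. Qed.

Lemma wlen_le1 S : wlen_le S 0 1.
Proof. by exists [::]. Qed.

Lemma wlen_leM S m n x y : wlen_le S m x -> wlen_le S n y -> wlen_le S (m + n) (x * y).
Proof.
move=> [w1 [s1 [S1 <-]]] [w2 [s2 [S2 <-]]]; exists (w1 ++ w2); split; [|split].
- by rewrite size_cat leq_add.
- by move=> z; rewrite mem_cat => /orP[/S1|/S2].
- exact: foldr_mul_cat.
Qed.

Lemma wlen_leX S d x n : wlen_le S d x -> wlen_le S (d * n) (x ^+ n).
Proof.
move=> Sx; elim: n => [|n IH]; first by rewrite muln0; apply: wlen_le1.
by rewrite expgS mulnS; apply: wlen_leM.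
Qed.

Lemma wlen_le_prod S (I : Type) (r : seq I) (d : I -> nat) (F : I -> G) :
  (forall i, wlen_le S (d i) (F i)) ->
  wlen_le S (\sum_(i <- r) d i) (\prod_(i <- r) F i).
Proof.
move=> SF; elim: r => [|i r IH]; first by rewrite !big_nil; apply: wlen_le1.
by rewrite !big_cons; apply: wlen_leM.
Qed.

End WordLength.

Lemma ghom_wlen_le (G H : groupType) (f : G -> H) S n x :
  ghom f -> wlen_le S n x -> wlen_le (map f S) n (f x).
Proof.
move=> hf [w [sw [Sw <-]]]; exists (map f w); split; first by rewrite size_map.
split; last by elim: w {sw Sw} => /= [|y w ->]; rewrite ?ghom1 ?hf.
move=> _ /mapP [y /Sw [Sy|Sy] ->]; [left|right]; apply/mapP.
  by exists y.
by exists y^-1; rewrite ?ghomV.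
Qed.

Section AutEquiv.
Variable G : groupType.
Implicit Types x y z : G.

Lemma aut_equiv_refl x : aut_equiv x x.
Proof. by exists id; split=> //; split=> //; exists id. Qed.

Lemma aut_equiv_sym x y : aut_equiv x y -> aut_equiv y x.
Proof.
move=> [f [[hf [g fK gK]] <-]]; exists g; split=> //.
by split; [apply: ghom_can fK gK | exists f].
Qed.

Lemma aut_equiv_trans x y z : aut_equiv x y -> aut_equiv y z -> aut_equiv x z.
Proof.
move=> [f [[hf bf] <-]] [g [[hg bg] <-]]; exists (g \o f).
by split=> //; split; [apply: ghom_comp | apply: bij_comp].
Qed.

Lemma aut_transversal (L : seq G) : exists s : seq G,
  [/\ uniq s, {subset s <= L},
      (forall x y, x \in s -> y \in s -> aut_equiv x y -> x = y) &
      (forall x, x \in L -> exists2 y, y \in s & aut_equiv x y)].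
Proof.
elim: L => [|z L [s [us sL inj cov]]]; first by exists [::].
have [[y ys zy]|nz] := classic (exists2 y, y \in s & aut_equiv z y).
  exists s; split=> // [x /sL xL|x]; first by rewrite in_cons xL orbT.
  by rewrite in_cons => /orP[/eqP->|/cov]; first exists y.
exists (z :: s); split.
- rewrite /= us andbT; apply: contra_notN nz => zs.
  by exists z => //; apply: aut_equiv_refl.
- by move=> x /[!in_cons] /orP[->|/sL->]; rewrite ?orbT.
- move=> x y /[!in_cons] /orP[/eqP->|xs] /orP[/eqP->|ys] // e.
  + by case: nz; exists y.
  + by case: nz; exists x => //; apply: aut_equiv_sym.
  + exact: inj.
- move=> x /[!in_cons] /orP[/eqP->|/cov [y ys e]].
    by exists z; rewrite ?mem_head //; apply: aut_equiv_refl.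
  by exists y; rewrite ?in_cons ?ys ?orbT.
Qed.

End AutEquiv.

Section GrowthExists.
Variable G : groupType.

Fixpoint words (A : seq G) (n : nat) : seq (seq G) :=
  if n is n'.+1 then [::] :: [seq x :: w | x <- A, w <- words A n'] else [:: [::]].

Lemma wordsP (A : seq G) n w :
  w \in words A n <-> size w <= n /\ {subset w <= A}.
Proof.
elim: n w => [|n IH] [|x w] //=; rewrite ?inE //; split=> //.
- by case.
- move=> /allpairsP [[y v] /= [yA /IH [sv vA] [-> ->]]]; split=> // z.
  by rewrite in_cons => /orP[/eqP->|/vA].
- move=> [sw xwA]; apply/allpairsP; exists (x, w); split=> //=.
    by apply: xwA; rewrite mem_head.
  by apply/IH; split=> // z zw; apply: xwA; rewrite in_cons zw orbT.
Qed.

Lemma aut_growth_exists (S : seq G) : exists f, is_aut_growth S f.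
Proof.
pose A := S ++ map inv S.
have memA x : x \in A <-> x \in S \/ x^-1 \in S.
  rewrite mem_cat -{2}[x]invgK (mem_map invg_inj); split; first by case/orP; auto.
  by case=> ->; rewrite ?orbT.
have ball n : exists m, exists s : seq G,
    [/\ size s = m, uniq s, (forall x, x \in s -> wlen_le S n x),
        (forall x y, x \in s -> y \in s -> aut_equiv x y -> x = y) &
        (forall g, wlen_le S n g -> exists2 x, x \in s & aut_equiv g x)].
  have [s [us sL inj cov]] := aut_transversal (map (foldr mul 1) (words A n)).
  exists (size s), s; split=> // [x /sL /mapP [w /wordsP [sw wA] ->]|g [w [sw [Sw <-]]]].
    by exists w; split=> //; split=> // y /wA /memA.
  by apply: cov; apply: map_f; apply/wordsP; split=> // y /Sw /memA.
by have [f hf] := functional_choice _ ball; exists f.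
Qed.

End GrowthExists.

Lemma iso_aut_equiv (G H : groupType) (f : G -> H) (g : H -> G) x y :
  ghom f -> cancel f g -> cancel g f -> aut_equiv x y -> aut_equiv (f x) (f y).
Proof.
move=> hf fK gK [p [[hp [q pK qK]] <-]]; exists (f \o p \o g).
split; last by rewrite /= fK.
split; first by apply: ghom_comp (ghom_comp (ghom_can hf fK gK) hp) hf.
by exists (f \o q \o g) => z /=; rewrite ?fK ?pK ?qK gK.
Qed.

Section MaxCentralizer.
Variable G : groupType.

Definition commutes_with_squares (x : G) := forall z, commute x (z * z).

(* In the direct power of the infinite dihedral group, these are exactly the
   nontrivial elements of the cyclic factors [<a_i>]. *)
Definition max_centralizer (x : G) :=
  [/\ commutes_with_squares x, x != 1 &
      forall y, commutes_with_squares y -> y != 1 ->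
        (forall z, commute z x -> commute z y) -> forall z, commute z y -> commute z x].

End MaxCentralizer.

Section Isomorphism.
Variables (G H : groupType) (f : G -> H) (g : H -> G).
Hypotheses (hf : ghom f) (fK : cancel f g) (gK : cancel g f).

Let hg : ghom g := ghom_can hf fK gK.

Lemma iso_generates S : generates S -> generates (map f S).
Proof.
move=> genS z; have [n Sz] := genS (g z).
by exists n; rewrite -(gK z); apply: ghom_wlen_le.
Qed.

Lemma iso_aut_growth S fn : is_aut_growth S fn -> is_aut_growth (map f S) fn.
Proof.
move=> growthS n; have [s [size_s us ball inj cov]] := growthS n.
exists (map f s); split.
- by rewrite size_map.
- by rewrite (map_inj_uniq (can_inj fK)).
- by move=> _ /mapP [x xs ->]; apply: ghom_wlen_le; auto.
- move=> _ _ /mapP [x xs ->] /mapP [y ys ->] e; congr f; apply: inj => //.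
  by rewrite -(fK x) -(fK y); apply: iso_aut_equiv e.
- move=> z /(ghom_wlen_le hg); rewrite -map_comp (eq_map fK) map_id.
  move=> /cov [x xs e]; exists (f x); first exact: map_f.
  by rewrite -(gK z); apply: iso_aut_equiv e.
Qed.

Lemma iso_virtually_abelian r :
  virtually_abelian_of_rank H r -> virtually_abelian_of_rank G r.
Proof.
move=> [phi [hphi [phi_inj [cs cover]]]]; exists (g \o phi); split; [|split].
- by move=> u v /=; rewrite hphi hg.
- by move=> u v /= /(can_inj gK); apply: phi_inj.
- exists (map g cs) => x; have [c [u [cs_c e]]] := cover (f x).
  by exists (g c), u; rewrite map_f //= -hg -e fK.
Qed.

Lemma iso_commutator_elt y : commutator_elt (f y) <-> commutator_elt y.
Proof.
split=> [[u [v e]]|[u [v ->]]]; last by exists (f u), (f v); rewrite (ghomR hf).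
by exists (g u), (g v); rewrite -(ghomR hg) -e fK.
Qed.

Lemma iso_in_gen (P : G -> Prop) (Q : H -> Prop) x :
  (forall y, Q (f y) <-> P y) -> in_gen P x <-> in_gen Q (f x).
Proof.
move=> PQ; split; first by apply: ghom_in_gen => // y /PQ.
by move=> /(ghom_in_gen (P := Q) (Q := P) hg); rewrite fK; apply=> y; rewrite -{1}(gK y) => /PQ.
Qed.

Let commute_iso z y : commute (g z) y <-> commute z (f y).
Proof.
split=> [/(ghom_commute hf)|/(ghom_commute hg)]; rewrite ?gK ?fK //.
Qed.

Let iso_commutes_with_squares x : commutes_with_squares x -> commutes_with_squares (f x).
Proof. by move=> x_sq z; rewrite -(gK z) -hf; apply: ghom_commute. Qed.

Lemma iso_max_centralizer x : max_centralizer x -> max_centralizer (f x).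
Proof.
move=> [x_sq nx1 x_max]; split; first exact: iso_commutes_with_squares.
  by apply: contra nx1 => /eqP fx1; rewrite -(fK x) fx1 (ghom1 hg).
move=> y y_sq ny1 Cxy z Cyz.
have gy_sq : commutes_with_squares (g y).
  by move=> u; rewrite -(fK u) -hg; apply: ghom_commute (y_sq _).
have ngy1 : g y != 1 by apply: contra ny1 => /eqP gy1; rewrite -(gK y) gy1 (ghom1 hf).
have Cxgy u : commute u x -> commute u (g y).
  by move=> /(ghom_commute hf) /Cxy; rewrite -{1}(gK y) -commute_iso fK.
by rewrite -commute_iso; apply: x_max gy_sq ngy1 Cxgy _ _; rewrite commute_iso gK.
Qed.

End Isomorphism.

(** * Finite direct powers *)

(* The phantom argument makes [fgroup 'I_r Dinf] use the canonical instances
   of ['I_r] and [Dinf] themselves, so that the generic lemmas below rewrite in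
   terms built from elements of [Dinf]. *)
Definition fgroup_of (I : finType) (T : groupType) of phant (I -> T) := {ffun I -> T}.
Notation fgroup I T := (fgroup_of (Phant (I -> T))).
HB.instance Definition _ (I : finType) (T : groupType) := Choice.on (fgroup I T).

Section DirectPowerLaws.
Variables (I : finType) (T : groupType).
Implicit Types x y z : fgroup I T.

Definition fgroup_mul x y : fgroup I T := [ffun i => x i * y i].
Definition fgroup_inv x : fgroup I T := [ffun i => (x i)^-1].
Definition fgroup_one : fgroup I T := [ffun => 1].

Lemma fgroup_mulA : associative fgroup_mul.
Proof. by move=> x y z; apply/ffunP=> i; rewrite !ffunE mulgA. Qed.
Lemma fgroup_mul1 : left_id fgroup_one fgroup_mul.
Proof. by move=> x; apply/ffunP=> i; rewrite !ffunE mul1g. Qed.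
Lemma fgroup_mulg1 : right_id fgroup_one fgroup_mul.
Proof. by move=> x; apply/ffunP=> i; rewrite !ffunE mulg1. Qed.
Lemma fgroup_mulV : left_inverse fgroup_one fgroup_inv fgroup_mul.
Proof. by move=> x; apply/ffunP=> i; rewrite !ffunE mulVg. Qed.
Lemma fgroup_mulgV : right_inverse fgroup_one fgroup_inv fgroup_mul.
Proof. by move=> x; apply/ffunP=> i; rewrite !ffunE mulgV. Qed.

End DirectPowerLaws.

HB.instance Definition _ (I : finType) (T : groupType) := isGroup.Build (fgroup I T)
  (@fgroup_mulA I T) (@fgroup_mul1 I T) (@fgroup_mulg1 I T)
  (@fgroup_mulV I T) (@fgroup_mulgV I T).

Section DirectPower.
Variables (I : finType) (T : groupType).
Implicit Types (i j : I) (a b : T) (x y : fgroup I T).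

Lemma fgroupM x y i : (x * y) i = x i * y i.
Proof. exact: ffunE. Qed.
Lemma fgroupV x i : x^-1 i = (x i)^-1.
Proof. exact: ffunE. Qed.
Lemma fgroup1 i : (1 : fgroup I T) i = 1.
Proof. exact: ffunE. Qed.

Lemma commute_fgroup x y : commute x y <-> forall i, commute (x i) (y i).
Proof.
split=> [cxy i|cxy]; first by rewrite /commute -!fgroupM cxy.
by apply/ffunP=> i; rewrite !fgroupM cxy.
Qed.

Lemma ghom_eval i : ghom (fun x : fgroup I T => x i).
Proof. by move=> x y; rewrite fgroupM. Qed.

Definition delta i a : fgroup I T := [ffun j => if j == i then a else 1].

Lemma deltaE i a j : delta i a j = if j == i then a else 1.
Proof. exact: ffunE. Qed.

Lemma ghom_delta i : ghom (delta i).
Proof.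
by move=> a b; apply/ffunP=> j; rewrite fgroupM !deltaE; case: eqP; rewrite ?mulg1.
Qed.

Lemma deltaM i a b : delta i (a * b) = delta i a * delta i b.
Proof. exact: ghom_delta. Qed.
Lemma deltaV i a : delta i a^-1 = (delta i a)^-1.
Proof. exact: ghomV (ghom_delta i) a. Qed.
Lemma deltaX i a n : delta i (a ^+ n) = delta i a ^+ n.
Proof. exact: ghomX (ghom_delta i) a n. Qed.
Lemma delta_expgz i a k : delta i (expgz a k) = expgz (delta i a) k.
Proof. exact: ghom_expgz a k (ghom_delta i). Qed.
Lemma delta1 i : delta i 1 = 1.
Proof. exact: ghom1 (ghom_delta i). Qed.

Lemma delta_commute i j a b : i != j -> commute (delta i a) (delta j b).
Proof.
move=> ij; apply/ffunP=> k; rewrite !fgroupM !deltaE.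
by case: (eqVneq k i) => [->|]; rewrite ?(negbTE ij) mulg1 ?mul1g.
Qed.

Lemma prod_delta_inj (sigma : I -> I) (F : I -> T) k :
  injective sigma -> (\prod_i delta (sigma i) (F i)) (sigma k) = F k.
Proof.
move=> sigma_inj; rewrite (ghom_prod (ghom_eval _)) (@big_only1 _ _ _ _ k) //.
  by rewrite deltaE eqxx.
by move=> j jk _; rewrite deltaE (inj_eq sigma_inj) eq_sym (negbTE jk).
Qed.

Lemma prod_delta x : \prod_i delta i (x i) = x.
Proof. by apply/ffunP=> k; apply: (@prod_delta_inj id). Qed.

Lemma ghom_fgroup_prod (K : groupType) (phi : I -> T -> K) :
  (forall i, ghom (phi i)) ->
  (forall i j a b, i != j -> commute (phi i a) (phi j b)) ->
  ghom (fun x : fgroup I T => \prod_i phi i (x i)).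
Proof.
move=> hphi cphi x y; under eq_bigr => i _ do rewrite fgroupM hphi.
by apply: prodgM_commute_uniq; rewrite ?index_enum_uniq // => i j /cphi.
Qed.

Lemma gaut_fgroup_map (phi : I -> T -> T) :
  (forall i, gaut (phi i)) -> gaut (fun x : fgroup I T => [ffun i => phi i (x i)]).
Proof.
move=> aut_phi; have /functional_choice [psi psiK] : forall i, exists psi : T -> T,
    cancel (phi i) psi /\ cancel psi (phi i).
  by move=> i; have [_ [psi ? ?]] := aut_phi i; exists psi.
split; first by move=> x y; apply/ffunP=> i; rewrite !(fgroupM, ffunE); case: (aut_phi i) => ->.
exists (fun x : fgroup I T => [ffun i => psi i (x i)]) => x;
  by apply/ffunP=> i; rewrite !ffunE ?(psiK i).1 ?(psiK i).2.
Qed.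

End DirectPower.

(** * The infinite dihedral group *)

(* [(k, e)] stands for [a ^ k * t ^ e] in the infinite dihedral group
   [<a, t | t ^ 2 = 1, t^-1 a t = a^-1>]. *)
Definition Dinf := (int * bool)%type.
HB.instance Definition _ := Choice.on Dinf.

Definition dinf_mul (x y : Dinf) : Dinf :=
  ((x.1 + (if x.2 then - y.1 else y.1))%R, x.2 (+) y.2).
Definition dinf_inv (x : Dinf) : Dinf := (if x.2 then x.1 else (- x.1)%R, x.2).
Definition dinf_one : Dinf := (0%R, false).

Lemma dinf_mulA : associative dinf_mul.
Proof. by move=> [k [] ] [l [] ] [m [] ]; rewrite /dinf_mul /=; congr pair; lia. Qed.
Lemma dinf_mul1 : left_id dinf_one dinf_mul.
Proof. by move=> [k e]; rewrite /dinf_mul /= add0r. Qed.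
Lemma dinf_mulg1 : right_id dinf_one dinf_mul.
Proof. by move=> [k []]; rewrite /dinf_mul /= ?oppr0 addr0. Qed.
Lemma dinf_mulV : left_inverse dinf_one dinf_inv dinf_mul.
Proof. by move=> [k []]; rewrite /dinf_mul /=; congr pair; lia. Qed.
Lemma dinf_mulgV : right_inverse dinf_one dinf_inv dinf_mul.
Proof. by move=> [k []]; rewrite /dinf_mul /=; congr pair; lia. Qed.

HB.instance Definition _ := isGroup.Build Dinf
  dinf_mulA dinf_mul1 dinf_mulg1 dinf_mulV dinf_mulgV.

Definition dinf_a : Dinf := (1%R, false).
Definition dinf_t : Dinf := (0%R, true).

Lemma dinfM (k l : int) (e f : bool) :
  ((k, e) : Dinf) * (l, f) = ((k + (if e then - l else l))%R, e (+) f).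
Proof. by []. Qed.

Lemma dinfV (k : int) (e : bool) : ((k, e) : Dinf)^-1 = (if e then k else (- k)%R, e).
Proof. by []. Qed.

Lemma dinf_t2 : dinf_t ^+ 2 = 1.
Proof. by []. Qed.

Lemma expgz_dinf (c k : int) : expgz ((c, false) : Dinf) k = ((c * k)%R, false).
Proof.
have expn_c n : ((c, false) : Dinf) ^+ n = ((c * n%:Z)%R, false).
  by elim: n => [|n IH]; rewrite ?mulr0 // expgS IH dinfM; congr pair; lia.
by case: k => n; rewrite /= ?invgK expn_c // dinfV NegzE; congr pair; lia.
Qed.

Definition dinf_lift (K : groupType) (a t : K) (x : Dinf) : K := expgz a x.1 * t ^+ x.2.

Lemma dinf_liftE x : dinf_lift dinf_a dinf_t x = x.
Proof.
by case: x => k []; rewrite /dinf_lift expgz_dinf ?expg1 ?mulg1 ?dinfM /=; congr pair; lia.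
Qed.

Lemma ghom_dinf_lift (K : groupType) (a t : K) :
  t ^+ 2 = 1 -> t^-1 * a * t = a^-1 -> ghom (dinf_lift a t).
Proof.
move=> t2 conj_a; have tV : t^-1 = t by apply: mulg1_eq; rewrite -expg2.
have ta k : t * expgz a k = expgz a (- k)%R * t.
  have conj_expgz : expgz a k ^ t = expgz (a ^ t) k := ghom_expgz a k (ghom_conjg t).
  by rewrite conjgCV tV conj_expgz conjgE mulgA conj_a expgzV expgzN.
move=> [k e] [l f]; rewrite /dinf_lift dinfM /= expgzD.
case: e; rewrite /= ?mulg1 -!mulgA; congr (_ * _).
rewrite expg1 mulgA ta -mulgA; congr (_ * _).
by case: f; rewrite /= ?mulg1 // -expg2 t2.
Qed.

(* The automorphism [a |-> a ^ (-1) ^ s, t |-> a ^ c * t]. *)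
Definition dinf_aut (s : bool) (c : int) (x : Dinf) : Dinf :=
  (((if s then - x.1 else x.1) + (if x.2 then c else 0))%R, x.2).

Lemma gaut_dinf_aut s c : gaut (dinf_aut s c).
Proof.
split; first by move=> [k e] [l f]; rewrite /dinf_aut !dinfM;
  case: s; case: e; case: f => /=; congr pair; lia.
exists (dinf_aut s (if s then c else - c)%R) => -[k e];
  by rewrite /dinf_aut /=; case: s; case: e => /=; congr pair; lia.
Qed.

Definition dinf_canon (x : Dinf) : Dinf :=
  if x.2 then dinf_t else (Posz (absz x.1), false).

Lemma dinf_aut_canon x : dinf_aut (~~ x.2 && (x.1 < 0)%R) (- x.1) x = dinf_canon x.
Proof.
rewrite /dinf_aut /dinf_canon; case: x => k [] /=; first by congr pair; lia.
by case: ltrP => k0; congr pair; lia.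
Qed.

Lemma dinf_absM (x y : Dinf) : (absz (x * y)%g.1 <= absz x.1 + absz y.1)%N.
Proof. by case: x y => k [] [l f] /=; lia. Qed.

Lemma dinf_absV (x : Dinf) : absz x^-1.1 = absz x.1.
Proof. by case: x => k [] /=; lia. Qed.

Lemma commute_dinf_lift (K : groupType) (a t a' t' : K) x y :
  commute a a' -> commute a t' -> commute t a' -> commute t t' ->
  commute (dinf_lift a t x) (dinf_lift a' t' y).
Proof.
move=> caa' cat' cta' ctt'.
have cy u : commute u a' -> commute u t' -> commute u (dinf_lift a' t' y).
  by move=> ua' ut'; apply: commuteM; [apply: commute_expgz | apply: commuteX].
apply/commute_sym/commuteM; [apply: commute_expgz | apply: commuteX];
  exact/commute_sym/cy.
Qed.

Lemma dinf_commg (x y : Dinf) : exists q : int, [~ x, y] = ((2 * q)%R, false).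
Proof.
case: x y => k [] [l []]; rewrite /commg /conjg !dinfV !dinfM /=;
  [exists (k - l)%R | exists l | exists (- k)%R | exists 0%R]; congr pair; lia.
Qed.

Lemma dinf_commute_transl (z y : Dinf) :
  y.2 = false -> commute z y <-> (y.1 != 0%R -> z.2 = false).
Proof.
case: z y => l f [k _] /= ->; rewrite /commute !dinfM addbF /=.
case: f => /=; last by split=> // _; congr pair; lia.
split=> [[e]|]; first by have -> : k = 0%R by lia.
by case: eqP => [->|_ /(_ isT)] // _; congr pair; lia.
Qed.

Lemma dinf_expgz_eq_a (y : Dinf) c : expgz y c = dinf_a -> c = 1%R \/ c = (-1)%R.
Proof.
case: y => k [] e; last first.
  move: e; rewrite expgz_dinf => -[] /intUnitRing.unitzPl.
  by rewrite qualifE => /orP[] /eqP; auto.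
have yy : ((k, true) : Dinf) * (k, true) = 1 by rewrite dinfM /=; congr pair; lia.
by move: e; case: c => n /=; rewrite expg_involution //; case: odd.
Qed.

(** * The presented group is isomorphic to [Dinfr r] *)

Notation Dinfr r := (fgroup 'I_r Dinf).

Definition da r (i : 'I_r) : Dinfr r := delta i dinf_a.
Definition dt r (i : 'I_r) : Dinfr r := delta i dinf_t.

Section Presentation.
Variable r : nat.
Implicit Types (i j : 'I_r) (h : Dinfr r).

Lemma rels_dinfr : rels (@da r) (@dt r).
Proof.
have cdelta x y i j : commute x y -> commute (delta i x) (delta j y : Dinfr r).
  move=> cxy; have [->|] := eqVneq i j; last exact: delta_commute.
  by rewrite /commute -!deltaM cxy.
split=> [i j|i j|i|i j]; rewrite /da /dt.
- by apply: cdelta; rewrite /commute !dinfM; congr pair; lia.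
- exact: cdelta.
- by rewrite -deltaX dinf_t2 delta1.
have [<-|ij] := eqVneq i j; first by rewrite -!deltaV -!deltaM.
by rewrite -mulgA (delta_commute _ _ (_ : j != i)) ?mulKg // eq_sym.
Qed.

Lemma in_gen_dinfr h : in_gen (fun x => exists i, x = da i \/ x = dt i) h.
Proof.
rewrite -(prod_delta h); apply: in_gen_prod => i.
rewrite -(dinf_liftE (h i)) /dinf_lift deltaM delta_expgz deltaX.
by apply: in_genM; [apply: in_gen_expgz | apply: in_genX]; apply: in_gen_gen; exists i; auto.
Qed.

Section Lift.
Variables (K : groupType) (a t : 'I_r -> K).
Hypothesis rel : rels a t.

Definition dinfr_lift h : K := \prod_i dinf_lift (a i) (t i) (h i).

Lemma ghom_dinf_lift_rels i : ghom (dinf_lift (a i) (t i)).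
Proof. by case: rel => _ _ t2 conj; apply: ghom_dinf_lift; rewrite // conj eqxx. Qed.

Lemma ghom_dinfr_lift : ghom dinfr_lift.
Proof.
have [ca ct _ conj] := rel.
have cta i j : i != j -> commute (t i) (a j).
  move=> ij; have := conj i j; rewrite (negbTE ij) => e.
  by rewrite /commute -{1}e -!mulgA mulVKg.
apply: (ghom_fgroup_prod (phi := fun i => dinf_lift (a i) (t i))) => [i|i j x y ij].
  exact: ghom_dinf_lift_rels.
by apply: commute_dinf_lift => //; [apply/commute_sym|]; apply: cta; rewrite // eq_sym.
Qed.

Lemma dinfr_lift_delta i x : dinfr_lift (delta i x) = dinf_lift (a i) (t i) x.
Proof.
rewrite /dinfr_lift (@big_only1 _ _ _ _ i) ?deltaE ?eqxx // => j ji _.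
by rewrite deltaE (negbTE ji) (ghom1 (ghom_dinf_lift_rels j)).
Qed.

End Lift.
End Presentation.

Lemma presents_dinfr (G : groupType) r (a t : 'I_r -> G) :
  presents a t ->
  exists f : G -> Dinfr r, [/\ ghom f, bijective f & forall i, f (a i) = da i].
Proof.
move=> [rel gen univ]; have [f [hf fat]] := univ _ _ _ (rels_dinfr r).
pose g := dinfr_lift a t; have hg : ghom g := ghom_dinfr_lift rel.
have g_da i : g (da i) = a i by rewrite /g (dinfr_lift_delta rel) /dinf_lift /= expg1 mulg1.
have g_dt i : g (dt i) = t i by rewrite /g (dinfr_lift_delta rel) /dinf_lift /= expg1 mul1g.
exists f; split=> //; last by move=> i; case: (fat i).
exists g => [x|h].
- apply: (@ghom_eq_in_gen _ _ (g \o f) id _ _ (ghom_comp hf hg)) (gen x) => //.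
  by move=> _ [i [->|->]] /=; case: (fat i) => fa ft; rewrite ?fa ?ft ?g_da ?g_dt.
- apply: (@ghom_eq_in_gen _ _ (f \o g) id _ _ (ghom_comp hg hf)) (in_gen_dinfr h) => //.
  by move=> _ [i [->|->]] /=; case: (fat i); rewrite ?g_da ?g_dt.
Qed.

(** * Commutators and automorphisms of [Dinfr r] *)

Section Translations.
Variable r : nat.
Implicit Types (i j : 'I_r) (x y z : Dinfr r).

Lemma virtually_abelian_dinfr : virtually_abelian_of_rank (Dinfr r) r.
Proof.
pose transl (u : 'I_r -> int) : Dinfr r := [ffun i => (u i, false)].
pose refl (e : {ffun 'I_r -> bool}) : Dinfr r := [ffun i => (0%R, e i)].
exists transl; split; [|split].
- by move=> u v; apply/ffunP=> i; rewrite fgroupM !ffunE.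
- by move=> u v e i; have /= := congr1 (fun x : Dinfr r => (x i).1) e; rewrite !ffunE.
exists (map refl (enum {ffun 'I_r -> bool})) => x.
exists (refl [ffun i => (x i).2]), (fun i => if (x i).2 then (- (x i).1)%R else (x i).1).
split; first by rewrite map_f ?mem_enum.
by apply/ffunP=> i; rewrite fgroupM !ffunE dinfM; case: (x i) => k [] /=; congr pair; lia.
Qed.

Definition even_transl x := forall i, exists q : int, x i = ((2 * q)%R, false).

Lemma even_transl_commutator x : in_gen (@commutator_elt _) x -> even_transl x.
Proof.
move: x; apply: in_gen_ind => [|x y ex ey|_ [u [v ->]]|_ [u [v ->]]] i.
- by exists 0%R; rewrite fgroup1.
- rewrite fgroupM; have [[p ->] [q ->]] := (ex i, ey i).
  by exists (p + q)%R; rewrite dinfM; congr pair; lia.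
- by rewrite (ghomR (ghom_eval i)); apply: dinf_commg.
- rewrite fgroupV (ghomR (ghom_eval i)); have [q ->] := dinf_commg (u i) (v i).
  by exists (- q)%R; rewrite dinfV; congr pair; lia.
Qed.

Lemma in_gen_even_transl x :
  even_transl x -> in_gen (fun y => exists i, y = da i ^+ 2) x.
Proof.
move=> ex; rewrite -(prod_delta x); apply: in_gen_prod => i.
have [q ->] := ex i; have -> : ((2 * q)%R, false) = expgz (dinf_a ^+ 2) q by rewrite expgz_dinf.
by rewrite delta_expgz deltaX; apply/in_gen_expgz/in_gen_gen; exists i.
Qed.

Lemma commutator_da2 i : commutator_elt (da i ^+ 2).
Proof. by exists (da i)^-1, (dt i); rewrite /da /dt -deltaV -deltaX -(ghomR (ghom_delta i)). Qed.

Lemma commutator_subgroup_dinfr x :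
  in_gen (@commutator_elt _) x <-> in_gen (fun y => exists i, y = da i ^+ 2) x.
Proof.
split=> [/even_transl_commutator /in_gen_even_transl //|].
by apply: in_gen_sub => _ [i ->]; apply: commutator_da2.
Qed.

End Translations.

Section Automorphisms.
Variable r : nat.
Implicit Types (i j : 'I_r) (x y z : Dinfr r).

Definition is_transl x := forall i, (x i).2 = false.
Definition transl_supp x : pred 'I_r := fun i => (x i).1 != 0%R.

Lemma transl_da i : is_transl (da i).
Proof. by move=> j; rewrite /da deltaE; case: eqP. Qed.

Lemma transl_supp_da i j : transl_supp (da i) j = (j == i).
Proof. by rewrite /transl_supp /da deltaE; case: ifP. Qed.

Lemma transl_supp0 x : is_transl x -> (forall i, ~~ transl_supp x i) -> x = 1.
Proof.
move=> tx x0; apply/ffunP=> i; move: (tx i) (x0 i); rewrite fgroup1 /transl_supp negbK.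
by case: (x i) => k e /= -> /eqP ->.
Qed.

Lemma commutes_with_squaresP x : commutes_with_squares x <-> is_transl x.
Proof.
split=> [x_sq i|tx z].
  have /commute_fgroup/(_ i) := x_sq (da i); rewrite fgroupM /da deltaE eqxx.
  by move/(dinf_commute_transl _ (erefl : (dinf_a * dinf_a).2 = false)); apply.
apply/commute_fgroup => i; rewrite fgroupM.
have zz : (z i * z i).2 = false by rewrite /= addbb.
by apply/(dinf_commute_transl _ zz) => _; apply: tx.
Qed.

Lemma commute_transl x z :
  is_transl x -> commute z x <-> forall i, transl_supp x i -> (z i).2 = false.
Proof.
move=> tx; rewrite commute_fgroup; split=> cz i.
  exact/(dinf_commute_transl _ (tx i)).
exact/(dinf_commute_transl _ (tx i))/cz.
Qed.

Lemma centralizer_sub_transl x y : is_transl x -> is_transl y ->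
  (forall z, commute z x -> commute z y) <->
  (forall i, transl_supp y i -> transl_supp x i).
Proof.
move=> tx ty; split=> [Cxy i yi|sub z /(commute_transl _ tx) zx]; last first.
  by apply/(commute_transl _ ty) => i /sub /zx.
apply: contraT => xi0; have : commute (dt i) x.
  apply/(commute_transl _ tx) => j xj; rewrite /dt deltaE.
  by case: eqP xj => [-> xi|//]; case/negP: xi0.
by move/Cxy/(commute_transl _ ty)/(_ i yi); rewrite /dt deltaE eqxx.
Qed.

Lemma max_centralizer_da i : max_centralizer (da i).
Proof.
have tda := transl_da i; split; first exact/commutes_with_squaresP.
  by apply/eqP => /(congr1 (fun x : Dinfr r => x i)); rewrite /da deltaE eqxx fgroup1.
move=> y /commutes_with_squaresP ty ny1 /(centralizer_sub_transl tda ty) sub.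
apply/(centralizer_sub_transl ty tda) => j; rewrite transl_supp_da => /eqP ->.
have [k yk|y0] := pickP (transl_supp y); last first.
  by case/eqP: ny1; apply: transl_supp0 => // k; rewrite y0.
by have := sub k yk; rewrite transl_supp_da => /eqP <-.
Qed.

Lemma max_centralizer_axis x :
  max_centralizer x -> exists j (c : int), c != 0%R /\ x = delta j ((c, false) : Dinf).
Proof.
case=> /commutes_with_squaresP tx nx1 x_max.
have [j xj|x0] := pickP (transl_supp x); last first.
  by case/eqP: nx1; apply: transl_supp0 => // i; rewrite x0.
exists j, (x j).1; split=> //.
have [da_sq nda1 _] := max_centralizer_da j.
have sub i : transl_supp x i -> transl_supp (da j) i.
  move: i; apply/(centralizer_sub_transl (transl_da j) tx); apply: x_max da_sq nda1 _.
  by apply/(centralizer_sub_transl tx (transl_da j)) => i; rewrite transl_supp_da => /eqP ->.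
apply/ffunP=> i; rewrite deltaE; case: eqP => [->|/eqP ij].
  by case: (x j) (tx j) => k e /= ->.
have : ~~ transl_supp x i by apply/negP => /sub; rewrite transl_supp_da (negbTE ij).
by rewrite /transl_supp negbK; case: (x i) (tx i) => k e /= -> /eqP ->.
Qed.

Lemma aut_da f i : gaut f ->
  exists j (s : int), (s = 1 \/ s = -1)%R /\ f (da i) = delta j ((s, false) : Dinf).
Proof.
move=> [hf [g fK gK]]; have hg := ghom_can hf fK gK.
have [j [s [_ e]]] :=
  max_centralizer_axis (iso_max_centralizer hf fK gK (max_centralizer_da i)).
exists j, s; split=> //; apply: (@dinf_expgz_eq_a (g (da j) i)).
rewrite -(ghom_expgz _ _ (ghom_eval i)) -(ghom_expgz _ _ hg) /da -delta_expgz.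
by rewrite expgz_dinf mul1r -e fK deltaE eqxx.
Qed.

Lemma transl_prod x : is_transl x -> x = \prod_i expgz (da i) (x i).1.
Proof.
move=> tx; rewrite -{1}(prod_delta x); apply: eq_bigr => i _.
by rewrite /da -delta_expgz expgz_dinf mul1r; case: (x i) (tx i) => k e /= ->.
Qed.

Lemma aut_transl f : gaut f ->
  exists2 sigma : 'I_r -> 'I_r, injective sigma &
  exists2 s : 'I_r -> int, (forall i, s i = 1 \/ s i = -1)%R &
    forall x, is_transl x -> forall i, f x (sigma i) = ((s i * (x i).1)%R, false).
Proof.
move=> autf; have [hf [g fK gK]] := autf; have hg := ghom_can hf fK gK.
have /functional_choice [sigma /functional_choice [s fda]] := fun i => aut_da i autf.
have sigma_inj : injective sigma.
  move=> i i' e; apply/eqP; apply: contraT => ii'.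
  have [[si fi] [si' fi']] := (fda i, fda i').
  have : f (da i') = f (da i) \/ f (da i') = (f (da i))^-1.
    rewrite fi fi' e -deltaV dinfV /=.
    by case: si => ->; case: si' => ->; [left|right|right|left].
  case=> /(congr1 g); rewrite ?(ghomV hg) !fK => /(congr1 (fun y : Dinfr r => y i)).
    by rewrite /da deltaE (negbTE ii') deltaE eqxx.
  by rewrite fgroupV /da deltaE (negbTE ii') deltaE eqxx.
exists sigma => //; exists s => [i|x tx i]; first by case: (fda i).
have -> : f x = \prod_j delta (sigma j) (((s j * (x j).1)%R, false) : Dinf).
  rewrite {1}(transl_prod tx) (ghom_prod hf); apply: eq_bigr => j _.
  by rewrite (ghom_expgz _ _ hf) (fda j).2 -delta_expgz expgz_dinf.
exact: prod_delta_inj.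
Qed.

End Automorphisms.

(** * Growth *)

Lemma leq_expn2r m n e : (m <= n)%N -> (m ^ e <= n ^ e)%N.
Proof. by move=> mn; elim: e => // e IH; rewrite !expnS leq_mul. Qed.

Section Growth.
Variable r : nat.
Implicit Types (i j : 'I_r) (x y z : Dinfr r).

Definition block_transl n (j : {ffun 'I_r -> 'I_n.+1}) : Dinfr r :=
  [ffun i : 'I_r => (Posz (i.+1 * n.+1 + j i)%N, false)].

Lemma transl_block n (j : {ffun 'I_r -> 'I_n.+1}) : is_transl (block_transl j).
Proof. by move=> i; rewrite ffunE. Qed.

Lemma aut_equiv_block_transl n (j j' : {ffun 'I_r -> 'I_n.+1}) :
  aut_equiv (block_transl j) (block_transl j') -> j = j'.
Proof.
move=> [f [autf e]]; have [sigma _ [s s1 fx]] := aut_transl autf.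
apply/ffunP=> m; have := fx _ (transl_block j) m; rewrite e !ffunE /=.
have := ltn_ord (j m); have := ltn_ord (j' (sigma m)).
case: (s1 m) => -> jm j'm [] eq_coord; last by lia.
have eq_block : (sigma m * n.+1 + j' (sigma m) = m * n.+1 + j m)%N by lia.
have sigma_m : sigma m = m.
  apply: val_inj; move/(congr1 (divn^~ n.+1)): eq_block.
  by rewrite !divnMDl // !divn_small // !addn0.
by move: eq_block; rewrite sigma_m => /addnI/val_inj ->.
Qed.

Lemma dinfr_growth_lower (S : seq (Dinfr r)) fn :
  generates S -> is_aut_growth S fn -> gle (fun n => n ^ r)%N fn.
Proof.
move=> genS growth.
have /functional_choice [len len_da] := fun i : 'I_r => genS (da i).
pose D := (\sum_i len i)%N.
have da_D i : wlen_le S D (da i).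
  by apply: wlen_le_mono (len_da i); rewrite /D (bigD1 i) //= leq_addr.
pose l := (r * (D * r.+1) + 1)%N; exists l; split; first by rewrite /l addn1.
move=> n; have [s [<- _ ball _ cov]] := growth (l * n + l)%N.
have block_ball (c : {ffun 'I_r -> 'I_n.+1}) : wlen_le S (l * n + l) (block_transl c).
  rewrite (transl_prod (transl_block c)); under eq_bigr => i _ do rewrite ffunE /=.
  apply: wlen_le_mono (wlen_le_prod _ (fun i => wlen_leX _ (da_D i))).
  have K_le i : (i.+1 * n.+1 + c i <= r.+1 * n.+1)%N.
    by have := ltn_ord i; have := ltn_ord (c i); nia.
  apply: (@leq_trans (\sum_(i < r) D * (r.+1 * n.+1))%N).
    by apply: leq_sum => i _; rewrite leq_mul2l K_le orbT.
  by rewrite big_const_ord iter_addn_0 /l; nia.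
have /functional_choice [rep rep_spec] : forall c : {ffun 'I_r -> 'I_n.+1},
    exists x, x \in s /\ aut_equiv (block_transl c) x.
  by move=> c; have [x xs e] := cov _ (block_ball c); exists x.
have : (size (map rep (enum {ffun 'I_r -> 'I_n.+1})) <= size s)%N.
  apply: uniq_leq_size => [|_ /mapP [c _ ->]]; last exact: (rep_spec c).1.
  rewrite map_inj_uniq ?enum_uniq // => c c' e; apply: aut_equiv_block_transl.
  apply: aut_equiv_trans (rep_spec c).2 _; rewrite e.
  exact/aut_equiv_sym/(rep_spec c').2.
rewrite size_map -cardT card_ffun !card_ord => size_s.
apply: leq_trans (leq_addr _ _); apply: leq_trans (leq_pmull _ _); last by rewrite /l addn1.
exact: leq_trans (leq_expn2r _ (leqnSn n)) size_s.
Qed.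

Definition dinfr_norm x : nat := \sum_i absz (x i).1.

Lemma dinfr_normM x y : (dinfr_norm (x * y)%g <= dinfr_norm x + dinfr_norm y)%N.
Proof. by rewrite -big_split; apply: leq_sum => i _; rewrite fgroupM dinf_absM. Qed.

Lemma dinfr_normV x : dinfr_norm x^-1 = dinfr_norm x.
Proof. by apply: eq_bigr => i _; rewrite fgroupV dinf_absV. Qed.

Lemma dinfr_norm_coord x i : (absz (x i).1 <= dinfr_norm x)%N.
Proof. by rewrite /dinfr_norm (bigD1 i) //= leq_addr. Qed.

Lemma wlen_le_dinfr_norm (S : seq (Dinfr r)) n x :
  wlen_le S n x -> (dinfr_norm x <= n * \max_(s <- S) dinfr_norm s)%N.
Proof.
move=> [w [sw [Sw <-]]]; set C := (\max_(s <- S) dinfr_norm s)%N.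
have le_C y : y \in w -> (dinfr_norm y <= C)%N.
  by move=> /Sw [] Sy; [|rewrite -dinfr_normV]; apply: leq_bigmax_seq.
apply: (@leq_trans (size w * C)); last by rewrite leq_mul2r sw orbT.
elim: w {sw Sw} le_C => [|y w IH] le_C /=.
  by rewrite /dinfr_norm big1 // => i _; rewrite fgroup1.
rewrite mulSn; apply: leq_trans (dinfr_normM _ _) (leq_add (le_C _ (mem_head _ _)) (IH _)).
by move=> z zw; apply: le_C; rewrite in_cons zw orbT.
Qed.

Definition canon x : Dinfr r := [ffun i => dinf_canon (x i)].

Lemma aut_equiv_canon x : aut_equiv x (canon x).
Proof.
pose phi i := dinf_aut (~~ (x i).2 && ((x i).1 < 0)%R) (- (x i).1).
exists (fun y : Dinfr r => [ffun i => phi i (y i)]); split.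
  by apply: gaut_fgroup_map => i; apply: gaut_dinf_aut.
by apply/ffunP=> i; rewrite !ffunE /phi dinf_aut_canon.
Qed.

Lemma dinfr_growth_upper (S : seq (Dinfr r)) fn :
  is_aut_growth S fn -> gle fn (fun n => n ^ r)%N.
Proof.
move=> growth; pose C := (\max_(s <- S) dinfr_norm s)%N.
exists (2 * C + 2)%N; split; first by rewrite addn2.
move=> n; have [s [<- us ball inj _]] := growth n; pose M := (n * C)%N.
pose box := [seq [ffun i => if (c i).2 then dinf_t else (Posz (c i).1, false)] : Dinfr r
            | c : {ffun 'I_r -> 'I_M.+1 * bool} <- enum {ffun 'I_r -> 'I_M.+1 * bool}].
have : (size (map canon s) <= size box)%N.
  apply: uniq_leq_size.
    rewrite map_inj_in_uniq // => x y xs ys e; apply: inj => //.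
    apply: aut_equiv_trans (aut_equiv_canon x) _; rewrite e.
    exact/aut_equiv_sym/aut_equiv_canon.
  move=> _ /mapP [x xs ->]; apply/mapP.
  exists [ffun i => (inord (absz (x i).1), (x i).2)]; first by rewrite mem_enum.
  apply/ffunP=> i; rewrite !ffunE /dinf_canon /=; case: (x i).2 => //.
  rewrite inordK // ltnS; apply: leq_trans (dinfr_norm_coord x i) _.
  exact: wlen_le_dinfr_norm (ball x xs).
rewrite size_map /box size_map -cardT card_ffun card_prod !card_ord card_bool => size_s.
apply: leq_trans size_s (leq_trans _ (leq_addr _ _)).
apply: leq_trans (leq_pmull _ (_ : 0 < 2 * C + 2)%N); last by rewrite addn2.
by apply: leq_expn2r; rewrite /M; nia.
Qed.

End Growth.

Theorem mainTheorem12 (r : nat) (G : groupType) (a t : 'I_r -> G) :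
  (0 < r)%N -> presents a t ->
  [/\ virtually_abelian_of_rank G r,
      (forall S : seq G, generates S ->
         (exists f, is_aut_growth S f) /\
         (forall f, is_aut_growth S f -> gequiv f (fun n => (n ^ r)%N))) &
      (forall g, in_gen (@commutator_elt G) g <->
                 in_gen (fun x => exists i, x = a i ^+ 2) g)].
Proof.
move=> _ /presents_dinfr [f [hf [g fK gK] fa]]; split.
- by apply: (iso_virtually_abelian hf fK gK); apply: virtually_abelian_dinfr.
- move=> S genS; split=> [|fn growth]; first exact: aut_growth_exists.
  have growth' := iso_aut_growth hf fK gK growth.
  split; first exact: dinfr_growth_upper growth'.
  exact: dinfr_growth_lower (iso_generates hf gK genS) growth'.
have squares y : (exists i, f y = da i ^+ 2) <-> (exists i, y = a i ^+ 2).
  split=> [[i e]|[i ->]]; exists i; last by rewrite (ghomX hf) fa.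
  by apply: (can_inj fK); rewrite e (ghomX hf) fa.
move=> x; apply: iff_trans (iso_in_gen hf fK gK _ (iso_commutator_elt hf fK gK)) _.
exact: iff_trans (commutator_subgroup_dinfr _) (iff_sym (iso_in_gen hf fK gK _ squares)).
Qed.
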